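(* Let $X$ be a real Banach space, $f:X\to\mathbb{R}\cup\{+\infty\}$ proper, convex and lsc, and assume $F_{\partial f}(x,x^* ) = f(x)+f^*(x^* )$ for some $(x,x^* )\in\mathrm{dom}\, f\times\mathrm{dom}\, f^*$. Then for every $(a,a^* )\in\mathcal{M}_{\partial f}(x,x^* )$, \[ a^*\in\partial f(x)\cap\partial f(a) \quad\text{and}\quad a\in\partial f^*(x^* )\cap\partial f^*(a^* ). \]
   Context: $f^*$ is the Fenchel conjugate. For a monotone $A:X\rightrightarrows X^*$, $F_A(x,x^* ) = \sup_{(y,y^* )\in\mathrm{Gr}(A)}\{\langle y,x^*\rangle+\langle x,y^*\rangle-\langle y,y^*\rangle\}$ is the Fitzpatrick function and $\mathcal{M}_A(x,x^* ) = \{(a,a^* )\in\mathrm{Gr}(A): F_A(x,x^* ) = \langle x,a^*\rangle + \langle a,x^*\rangle - \langle a,a^*\rangle\}$ is the set of points of the graph attaining this supremum. $\partial f^*(x^* )$ denotes $\{y\in X: f^*(z^* )\ge f^*(x^* )+\langle y, z^*-x^*\rangle\ \forall z^*\}$. *)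

From HB Require Import structures.
From mathcomp Require Import all_boot all_order all_algebra.
From mathcomp Require Import all_classical all_reals all_analysis.
Set Implicit Arguments. Unset Strict Implicit. Unset Printing Implicit Defensive.
Import Order.TTheory GRing.Theory Num.Theory.
Import numFieldNormedType.Exports.
Local Open Scope classical_set_scope.
Local Open Scope ring_scope.

(* Elements of the topological dual X^* of a real normed space X are
   represented as functions X -> R that are linear and continuous;
   the duality pairing <x, x^*> is the application x^* x. *)
Definition is_dual (R : realType) (X : normedModType R) (xs : X -> R) : Prop :=
  (forall (a : R) (u v : X), xs (a *: u + v) = a * xs u + xs v) /\ continuous xs.

Definition dualset (R : realType) (X : normedModType R) : set (X -> R) :=
  [set xs | is_dual xs].

Definition proper_fun (R : realType) (X : normedModType R) (f : X -> \bar R) : Prop :=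
  (forall x, f x != -oo%E) /\ exists x, f x != +oo%E.

Definition convex_fun (R : realType) (X : normedModType R) (f : X -> \bar R) : Prop :=
  forall (x y : X) (t : R), 0 < t < 1 ->
    (f (t *: x + (1 - t) *: y)%R <= t%:E * f x + (1 - t)%:E * f y)%E.

Definition dom (R : realType) (X : normedModType R) (f : X -> \bar R) : set X :=
  [set x | f x < +oo]%E.

Definition conj (R : realType) (X : normedModType R) (f : X -> \bar R)
  (xs : X -> R) : \bar R :=
  ereal_sup [set ((xs y)%:E - f y)%E | y in [set: X]].

Definition dom_conj (R : realType) (X : normedModType R) (f : X -> \bar R)
  : set (X -> R) := [set xs | is_dual xs /\ (conj f xs < +oo)%E].

Definition subdiff (R : realType) (X : normedModType R) (f : X -> \bar R) (x : X)
  : set (X -> R) :=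
  [set xs | is_dual xs /\ forall y : X, (f y >= f x + (xs (y - x)%R)%:E)%E].

(* subdifferential of f^* at x^* : a subset of X (as in the paper) *)
Definition subdiff_conj (R : realType) (X : normedModType R) (f : X -> \bar R)
  (xs : X -> R) : set X :=
  [set y | forall zs : X -> R, is_dual zs ->
     (conj f zs >= conj f xs + ((zs y - xs y)%R)%:E)%E].

Definition graph (R : realType) (X : normedModType R) (A : X -> set (X -> R))
  : set (X * (X -> R)) := [set p | A p.1 p.2].

Definition fitzpatrick (R : realType) (X : normedModType R) (A : X -> set (X -> R))
  (x : X) (xs : X -> R) : \bar R :=
  ereal_sup [set ((p.2 x + xs p.1 - p.2 p.1)%R)%:E | p in graph A].

Definition Mset (R : realType) (X : normedModType R) (A : X -> set (X -> R))
  (x : X) (xs : X -> R) : set (X * (X -> R)) :=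
  [set p | graph A p /\
     fitzpatrick A x xs = ((p.2 x + xs p.1 - p.2 p.1)%R)%:E].

From HB Require Import structures.
From mathcomp Require Import all_boot all_order all_algebra.
From mathcomp Require Import all_classical all_reals all_analysis.
From mathcomp Require Import lra.

Set Implicit Arguments.
Unset Strict Implicit.
Unset Printing Implicit Defensive.
Import Order.TTheory GRing.Theory Num.Theory.
Import numFieldNormedType.Exports.
Local Open Scope classical_set_scope.
Local Open Scope ring_scope.

(* A point (a, a^* ) of the graph of the subdifferential attaining F(x, x^* ) gives
   f(x) + f^*(x^* ) = <x, a^*> + <a, x^*> - <a, a^*>
                   = (<x, a^*> - f(x)) + (<a, x^*> - f(a)) + f(x) - f^*(a^* ),
   using the Fenchel-Young equality f(a) + f^*(a^* ) = <a, a^*>.  Both Fenchel-Young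
   inequalities f^*(a^* ) >= <x, a^*> - f(x) and f^*(x^* ) >= <a, x^*> - f(a) must then
   be equalities, and each Fenchel-Young equality is a subdifferential inclusion. *)

Lemma dualB (R : realType) (X : normedModType R) (zs : X -> R) (u v : X) :
  is_dual zs -> zs (u - v) = zs u - zs v.
Proof.
by move=> [zs_lin _]; rewrite -scaleN1r addrC zs_lin mulN1r addrC.
Qed.

Section FenchelYoung.
Variables (R : realType) (X : normedModType R) (f : X -> \bar R).

Lemma fenchel_young (zs : X -> R) (y : X) : ((zs y)%:E - f y <= conj f zs)%E.
Proof. by apply: ereal_sup_ubound; exists y. Qed.

Lemma proper_fin_num (x : X) : proper_fun f -> (f x < +oo)%E -> f x \is a fin_num.
Proof. by move=> [f_nNy _] fx_lt; rewrite fin_numE f_nNy lt_eqF. Qed.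

Lemma subdiff_fin_num (a : X) (as_ : X -> R) :
  proper_fun f -> subdiff f a as_ -> f a \is a fin_num.
Proof.
move=> [f_nNy [y fy_nPy]] [_ /(_ y) fy_ge]; rewrite fin_numE f_nNy /=.
by apply: contra fy_nPy => /eqP fa_Py; move: fy_ge; rewrite fa_Py addye // leye_eq.
Qed.

Lemma conj_fin_num (x : X) (xs : X -> R) :
  f x \is a fin_num -> (conj f xs < +oo)%E -> conj f xs \is a fin_num.
Proof.
move=> /EFin_fin_numP[r fx_E] conj_lt; rewrite fin_numElt conj_lt andbT.
by apply: lt_le_trans (fenchel_young xs x); rewrite fx_E ltNyr.
Qed.

Lemma conj_subdiffE (a : X) (as_ : X -> R) (r : R) :
  subdiff f a as_ -> f a = r%:E -> conj f as_ = (as_ a - r)%:E.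
Proof.
move=> [as_dual as_sub] fa_E; apply/eqP; rewrite eq_le.
rewrite [Y in _ && Y](le_trans _ (fenchel_young as_ a)) ?fa_E // andbT.
apply: ge_ereal_sup => _ [y _ <-]; move: (as_sub y); rewrite fa_E dualB //.
case: (f y) => [s | | ] //=; last by rewrite addeNy leNye.
by rewrite -!EFinD !lee_fin => ?; lra.
Qed.

Lemma fenchel_young_eq_subdiff (x : X) (xs : X -> R) (r : R) :
  is_dual xs -> f x = r%:E -> conj f xs = (xs x - r)%:E -> subdiff f x xs.
Proof.
move=> xs_dual fx_E conj_E; split=> // y; rewrite fx_E dualB // -EFinD.
have := fenchel_young xs y; rewrite conj_E.
case: (f y) => [s | | ] //=; last by rewrite leey.
by rewrite -EFinD !lee_fin => ?; lra.
Qed.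

Lemma fenchel_young_eq_subdiff_conj (y : X) (xs : X -> R) (r : R) :
  f y = r%:E -> conj f xs = (xs y - r)%:E -> subdiff_conj f xs y.
Proof.
move=> fy_E conj_E zs _; rewrite conj_E -EFinD.
by apply: le_trans (fenchel_young zs y); rewrite fy_E -EFinD lee_fin; lra.
Qed.

Lemma Mset_fenchel_young_eq (x a : X) (xs as_ : X -> R) (fx fa cx : R) :
  f x = fx%:E -> f a = fa%:E -> conj f xs = cx%:E ->
  fitzpatrick (subdiff f) x xs = (f x + conj f xs)%E ->
  Mset (subdiff f) x xs (a, as_) ->
  conj f as_ = (as_ x - fx)%:E /\ conj f xs = (xs a - fa)%:E.
Proof.
move=> fx_E fa_E conj_xs_E fitz_E [as_sub /= fitz_at_a].
have conj_as_E : conj f as_ = (as_ a - fa)%:E := conj_subdiffE as_sub fa_E.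
have := fenchel_young as_ x; have := fenchel_young xs a.
move: fitz_at_a; rewrite fitz_E fx_E fa_E conj_xs_E conj_as_E -!EFinD !lee_fin.
by move=> [] fitz_eq fy_xs fy_as; split; congr EFin; lra.
Qed.

End FenchelYoung.

Theorem proposition4p1 (R : realType) (X : completeNormedModType R)
  (f : X -> \bar R) (x : X) (xs : X -> R) :
  proper_fun f -> convex_fun f -> lower_semicontinuous f ->
  x \in dom f -> xs \in dom_conj f ->
  fitzpatrick (subdiff f) x xs = (f x + conj f xs)%E ->
  forall (a : X) (as_ : X -> R), Mset (subdiff f) x xs (a, as_) ->
    (as_ \in subdiff f x `&` subdiff f a) /\
    (a \in subdiff_conj f xs `&` subdiff_conj f as_).
Proof.
move=> f_proper _ _; rewrite !inE => x_dom [_ conj_xs_lt] fitz_E a as_ a_M.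
have as_sub_a : subdiff f a as_ by case: a_M.
have fx_fin := proper_fin_num f_proper x_dom.
have /EFin_fin_numP[fx fx_E] := fx_fin.
have /EFin_fin_numP[fa fa_E] := subdiff_fin_num f_proper as_sub_a.
have /EFin_fin_numP[cx conj_xs_E] := conj_fin_num fx_fin conj_xs_lt.
have [conj_as_E conj_xs_E'] := Mset_fenchel_young_eq fx_E fa_E conj_xs_E fitz_E a_M.
split; rewrite !inE; split.
- by apply: fenchel_young_eq_subdiff fx_E conj_as_E; case: as_sub_a.
- exact: as_sub_a.
- exact: fenchel_young_eq_subdiff_conj fa_E conj_xs_E'.
- exact: fenchel_young_eq_subdiff_conj fa_E (conj_subdiffE as_sub_a fa_E).
Qed.
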